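(* Let $\mathsf{\Sigma}\in\mathbb{R}^{N\times N_S}$ and $\mathsf{\Lambda}\in\mathbb{R}^{N\times N_L}$ be the Star-to-RWG and Loop-to-RWG matrices of a triangular surface mesh (see context), so that $\mathsf{\Sigma}^{\mathrm T}\mathsf{\Lambda}=\mathsf{0}$. For $1\le n\le N_S$ and $1\le m\le N_L$ define the filtered Star and Loop matrices $$\mathsf{\Sigma}_n=\mathsf{\Sigma}(\mathsf{\Sigma}^{\mathrm T}\mathsf{\Sigma})^+(\mathsf{\Sigma}^{\mathrm T}\mathsf{\Sigma})_n,\qquad \mathsf{\Lambda}_m=\mathsf{\Lambda}(\mathsf{\Lambda}^{\mathrm T}\mathsf{\Lambda})^+(\mathsf{\Lambda}^{\mathrm T}\mathsf{\Lambda})_m .$$ Then $\mathsf{\Sigma}_n^{\mathrm T}\mathsf{\Lambda}_m=\mathsf{0}$ for all such $n,m$.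
   Context: Consider a closed triangulated surface with $N$ edges, $N_S$ triangles (cells) and $N_L$ vertices. Each edge $m$ is shared by two triangles $c_m^+$ and $c_m^-$. The Star-to-RWG matrix is defined by $[\mathsf{\Sigma}]_{mn}=1$ if cell $n$ is $c_m^+$, $-1$ if cell $n$ is $c_m^-$, and $0$ otherwise. The Loop-to-RWG matrix $\mathsf{\Lambda}$ has $[\mathsf{\Lambda}]_{mn}=\pm1$ when vertex $n$ is one of the two endpoints of edge $m$ (opposite signs for the two endpoints, fixed by the orientation convention of the RWG functions) and $0$ otherwise; with this convention $\mathsf{\Sigma}^{\mathrm T}\mathsf{\Lambda}=\mathsf{0}$. $^+$ denotes the Moore–Penrose pseudo-inverse. Filtered Laplacian: for $\mathsf{X}\in\{\mathsf{\Sigma},\mathsf{\Lambda}\}$ with $N_x$ columns, let $\mathsf{X}=\mathsf{U}_X\mathsf{S}_X\mathsf{V}_X^{\mathrm T}$ be a (fixed) singular value decomposition with $\mathsf{V}_X\in\mathbb{R}^{N_x\times N_x}$ orthogonal and singular values $\sigma_{X,1}\ge\sigma_{X,2}\ge\dots\ge\sigma_{X,N_x}\ge0$, so that $\mathsf{X}^{\mathrm T}\mathsf{X}=\mathsf{V}_X\,\mathrm{diag}(\sigma_{X,i}^2)\,\mathsf{V}_X^{\mathrm T}$. For $1\le n\le N_x$ let $\mathsf{L}_{X,n}$ be the $N_x\times N_x$ diagonal matrix with $[\mathsf{L}_{X,n}]_{ii}=\sigma_{X,i}$ if $i>N_x-n$ and $0$ otherwise, and set $(\mathsf{X}^{\mathrm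 T}\mathsf{X})_n=\mathsf{V}_X\mathsf{L}_{X,n}^2\mathsf{V}_X^{\mathrm T}$. *)

From HB Require Import structures.
From mathcomp Require Import all_boot all_order all_algebra.
From mathcomp Require Import reals.
From Stdlib Require Import ClassicalEpsilon.
Set Implicit Arguments. Unset Strict Implicit. Unset Printing Implicit Defensive.
Import Order.TTheory GRing.Theory Num.Theory.
Local Open Scope ring_scope.

Section Defs.
Variable R : realType.

(* Star-to-RWG matrix: edge m (row) has cells cp m = c_m^+ and cm m = c_m^-. *)
Definition star_mx (N NS : nat) (cp cm : 'I_N -> 'I_NS) : 'M[R]_(N, NS) :=
  \matrix_(m < N, n < NS)
    (if n == cp m then 1 else if n == cm m then -1 else 0).

(* Loop-to-RWG matrix: edge m has endpoints vp m (sign +1) and vm m (sign -1);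
   the orientation convention is encoded by the choice of vp / vm. *)
Definition loop_mx (N NL : nat) (vp vm : 'I_N -> 'I_NL) : 'M[R]_(N, NL) :=
  \matrix_(m < N, n < NL)
    (if n == vp m then 1 else if n == vm m then -1 else 0).

Definition orthogonal_mx (n : nat) (Q : 'M[R]_n) : Prop :=
  Q^T *m Q = 1%:M /\ Q *m Q^T = 1%:M.

Definition sv_mx (p q : nat) (sigma : 'I_q -> R) : 'M[R]_(p, q) :=
  \matrix_(i < p, j < q) (if (i : nat) == (j : nat) then sigma j else 0).

Definition is_svd (p q : nat) (X : 'M[R]_(p, q)) (U : 'M[R]_p)
  (sigma : 'I_q -> R) (V : 'M[R]_q) : Prop :=
  [/\ orthogonal_mx U /\ orthogonal_mx V,
      (forall i, 0 <= sigma i),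
      (forall i j : 'I_q, (i <= j)%N -> sigma j <= sigma i),
      (forall j : 'I_q, (p <= j)%N -> sigma j = 0)
    & X = U *m sv_mx p sigma *m V^T].

Definition is_mp_inverse (p q : nat) (A : 'M[R]_(p, q)) (Y : 'M[R]_(q, p)) : Prop :=
  [/\ A *m Y *m A = A, Y *m A *m Y = Y, (A *m Y)^T = A *m Y & (Y *m A)^T = Y *m A].

Definition mp_pinv (p q : nat) (A : 'M[R]_(p, q)) : 'M[R]_(q, p) :=
  epsilon (inhabits 0) (is_mp_inverse A).

(* L_{X,n}: diagonal, [L]_ii = sigma_i iff i > N_x - n (1-based), i.e.
   N_x - n <= i for 0-based i. *)
Definition Lfilt (q : nat) (sigma : 'I_q -> R) (n : nat) : 'M[R]_q :=
  \matrix_(i < q, j < q)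
    (if (i == j) && (q - n <= i)%N then sigma i else 0).

Definition filt_lap (q : nat) (V : 'M[R]_q) (sigma : 'I_q -> R) (n : nat) : 'M[R]_q :=
  V *m (Lfilt sigma n *m Lfilt sigma n) *m V^T.

Definition filt_mx (p q : nat) (X : 'M[R]_(p, q)) (V : 'M[R]_q) (sigma : 'I_q -> R)
  (n : nat) : 'M[R]_(p, q) :=
  X *m mp_pinv (X^T *m X) *m filt_lap V sigma n.

End Defs.

From HB Require Import structures.
From mathcomp Require Import all_boot all_order all_algebra.
From mathcomp Require Import reals.
Import Order.TTheory GRing.Theory Num.Theory.
Local Open Scope ring_scope.

(* Σ_n^T Λ_m = (..)^T Σ^T Λ (..): the pseudo-inverse and filtered-Laplacian factors
   sit outside Σ^T Λ. *)
Lemma trmx_mulmx_eq0 (R : comRingType) (p q r s t : nat)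
    (A : 'M[R]_(p, q)) (B : 'M[R]_(p, r)) (P : 'M[R]_(q, s)) (Q : 'M[R]_(r, t)) :
  A^T *m B = 0 -> (A *m P)^T *m (B *m Q) = 0.
Proof. by move=> AB0; rewrite trmx_mul -mulmxA (mulmxA A^T) AB0 mul0mx mulmx0. Qed.

Theorem mainTheorem1 (R : realType) (N NS NL : nat)
  (cp cm : 'I_N -> 'I_NS) (vp vm : 'I_N -> 'I_NL)
  (hc : forall m, cp m != cm m) (hv : forall m, vp m != vm m)
  (horth : (star_mx R cp cm)^T *m loop_mx R vp vm = 0)
  (US : 'M[R]_N) (sS : 'I_NS -> R) (VS : 'M[R]_NS)
  (UL : 'M[R]_N) (sL : 'I_NL -> R) (VL : 'M[R]_NL)
  (hsvdS : is_svd (star_mx R cp cm) US sS VS)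
  (hsvdL : is_svd (loop_mx R vp vm) UL sL VL)
  (n m : nat) (hn : (1 <= n <= NS)%N) (hm : (1 <= m <= NL)%N) :
  (filt_mx (star_mx R cp cm) VS sS n)^T *m filt_mx (loop_mx R vp vm) VL sL m = 0.
Proof. by rewrite /filt_mx -!mulmxA; apply: trmx_mulmx_eq0. Qed.
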